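(* Let $\Gamma$ be a finite set of formulas and $\alpha$ a formula, all in negation normal form, of the language $\{\rightarrow,\sim,\neg\}$. Then $\Gamma\vdash_{\text{Ł}(\neg)}\alpha$ if and only if there is a finite set $\Delta$ consisting of instances of the $\neg$-axioms such that $\boxdot\Gamma,\Delta\vdash_{\text{Ł}}\alpha$.
   Context: Formulas are built from a countable set of propositional variables using the connectives $\rightarrow$ (binary), $\sim$ and $\neg$ (unary). Write $\alpha\leftrightarrow\beta$ as shorthand for the pair of formulas $\alpha\rightarrow\beta$ and $\beta\rightarrow\alpha$ (an axiom of the form $\alpha\leftrightarrow\beta$ means both are axioms). Łukasiewicz logic $\vdash_{\text{Ł}}$ is axiomatized by the axiom schemes $\alpha\rightarrow(\beta\rightarrow\alpha)$; $(\alpha\rightarrow\beta)\rightarrow((\beta\rightarrow\gamma)\rightarrow(\alpha\rightarrow\gamma))$; $((\alpha\rightarrow\beta)\rightarrow\beta)\rightarrow((\beta\rightarrow\alpha)\rightarrow\alpha)$; $({\sim}\beta\rightarrow{\sim}\alpha)\rightarrow(\alpha\rightarrow\beta)$; and the rule Modus Ponens $\alpha,\alpha\rightarrow\beta/\beta$. When $\vdash_{\text{Ł}}$ is applied to formulas of the language $\{\rightarrow,\sim,\neg\}$, every formula whose main connective is $\neg$ is treated as an atomic formula. The logic $\text{Ł}(\neg)$ (consequence relation $\vdash_{\text{Ł}(\neg)}$) extends Łukasiewicz logic by the $\neg$-axioms $\neg\neg\alpha\leftrightarrow\alpha$; $\neg{\sim}\alpha\leftrightarrow{\sim}\neg\alpha$;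 $({\sim}\neg\alpha\rightarrow{\sim}\neg\beta)\leftrightarrow{\sim}\neg(\alpha\rightarrow\beta)$; and the rule $\alpha/{\sim}\neg\alpha$. A formula is in negation normal form if it is built using $\rightarrow,\sim$ only from literals of the form $p$ or $\neg p$ with $p$ a propositional variable. For a set $\Gamma$ of formulas, $\boxdot\Gamma:=\{{\sim}\neg\gamma:\gamma\in\Gamma\}\cup\Gamma$. *)

From Stdlib Require Import List.
Import ListNotations.

Inductive form : Type :=
| Var : nat -> form
| Imp : form -> form -> form
| Tl  : form -> form             (* ~ alpha  (Łukasiewicz negation) *)
| Ng  : form -> form.            (* ¬ alpha  (the additional negation) *)

Inductive nnf : form -> Prop :=
| nnf_var : forall p, nnf (Var p)
| nnf_nvar : forall p, nnf (Ng (Var p))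
| nnf_imp : forall a b, nnf a -> nnf b -> nnf (Imp a b)
| nnf_tl : forall a, nnf a -> nnf (Tl a).

(* Axiom schemes of Łukasiewicz logic (¬-formulas are simply treated as atoms). *)
Inductive luk_axiom : form -> Prop :=
| LA1 : forall a b, luk_axiom (Imp a (Imp b a))
| LA2 : forall a b c,
    luk_axiom (Imp (Imp a b) (Imp (Imp b c) (Imp a c)))
| LA3 : forall a b,
    luk_axiom (Imp (Imp (Imp a b) b) (Imp (Imp b a) a))
| LA4 : forall a b, luk_axiom (Imp (Imp (Tl b) (Tl a)) (Imp a b)).

(* Instances of the ¬-axioms; each "phi <-> psi" contributes both implications. *)
Inductive neg_axiom : form -> Prop :=
| NA1a : forall a, neg_axiom (Imp (Ng (Ng a)) a)
| NA1b : forall a, neg_axiom (Imp a (Ng (Ng a)))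
| NA2a : forall a, neg_axiom (Imp (Ng (Tl a)) (Tl (Ng a)))
| NA2b : forall a, neg_axiom (Imp (Tl (Ng a)) (Ng (Tl a)))
| NA3a : forall a b,
    neg_axiom (Imp (Imp (Tl (Ng a)) (Tl (Ng b))) (Tl (Ng (Imp a b))))
| NA3b : forall a b,
    neg_axiom (Imp (Tl (Ng (Imp a b))) (Imp (Tl (Ng a)) (Tl (Ng b)))).

Inductive ded_L (G : form -> Prop) : form -> Prop :=
| dL_hyp : forall a, G a -> ded_L G a
| dL_ax : forall a, luk_axiom a -> ded_L G a
| dL_mp : forall a b, ded_L G a -> ded_L G (Imp a b) -> ded_L G b.

Inductive ded_LN (G : form -> Prop) : form -> Prop :=
| dN_hyp : forall a, G a -> ded_LN G a
| dN_ax : forall a, luk_axiom a -> ded_LN G a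
| dN_nax : forall a, neg_axiom a -> ded_LN G a
| dN_mp : forall a b, ded_LN G a -> ded_LN G (Imp a b) -> ded_LN G b
| dN_rule : forall a, ded_LN G a -> ded_LN G (Tl (Ng a)).

Definition boxdot (G : list form) : list form :=
  map (fun g => Tl (Ng g)) G ++ G.

(* The rule alpha / ~¬alpha is admissible in Ł over the premises boxdot Gamma
   together with all instances of the ¬-axioms, by induction on Ł-derivations.
   By ¬-axioms 2 and 3, ~¬ commutes with ~ and -> up to provable equivalence,
   so ~¬ of a formula is equivalent to the formula obtained by pushing ~¬ down
   to its atoms and ¬-subformulas.  Pushed this way, a Ł-axiom becomes an
   instance of the same axiom scheme and a ¬-axiom becomes provable; ~¬ of a
   premise ~¬g is equivalent to ~~¬¬g, hence (¬-axiom 1) to the premise g; and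
   modus ponens is preserved by ¬-axiom 3.  Hence Ł(¬)-derivability from Gamma
   is Ł-derivability from boxdot Gamma plus the ¬-axioms, and a finite Delta is
   extracted from the derivation. *)

From Stdlib Require Import List.
Import ListNotations.

Section LukasiewiczCalculus.

Variable G : form -> Prop.

Lemma ded_L_trans a b c :
  ded_L G (Imp a b) -> ded_L G (Imp b c) -> ded_L G (Imp a c).
Proof.
  intros Hab Hbc.
  exact (dL_mp _ _ _ Hbc (dL_mp _ _ _ Hab (dL_ax _ _ (LA2 a b c)))).
Qed.

Lemma ded_L_imp_l a b c :
  ded_L G (Imp a b) -> ded_L G (Imp (Imp b c) (Imp a c)).
Proof. intro Hab. exact (dL_mp _ _ _ Hab (dL_ax _ _ (LA2 a b c))). Qed.

Lemma ded_L_modus_ponens_imp a b : ded_L G (Imp a (Imp (Imp a b) b)).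
Proof. exact (ded_L_trans _ _ _ (dL_ax _ _ (LA1 a (Imp b a))) (dL_ax _ _ (LA3 b a))). Qed.

Lemma ded_L_imp_swap a b c :
  ded_L G (Imp (Imp a (Imp b c)) (Imp b (Imp a c))).
Proof.
  apply (ded_L_trans _ _ _ (dL_ax _ _ (LA2 a (Imp b c) c))).
  apply ded_L_imp_l, ded_L_modus_ponens_imp.
Qed.

Lemma ded_L_imp_r a b c :
  ded_L G (Imp b c) -> ded_L G (Imp (Imp a b) (Imp a c)).
Proof.
  intro Hbc. exact (dL_mp _ _ _ Hbc (dL_mp _ _ _ (dL_ax _ _ (LA2 a b c)) (ded_L_imp_swap _ _ _))).
Qed.

Lemma ded_L_imp_mono a a' b b' :
  ded_L G (Imp a' a) -> ded_L G (Imp b b') ->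
  ded_L G (Imp (Imp a b) (Imp a' b')).
Proof.
  intros Ha Hb. apply (ded_L_trans _ (Imp a' b)).
  - apply ded_L_imp_l, Ha.
  - apply ded_L_imp_r, Hb.
Qed.

Lemma ded_L_discharge t a : ded_L G t -> ded_L G (Imp (Imp t a) a).
Proof. intro Ht. exact (dL_mp _ _ _ Ht (ded_L_modus_ponens_imp t a)). Qed.

Lemma ded_L_refl a : ded_L G (Imp a a).
Proof.
  apply (ded_L_trans _ _ _ (dL_ax _ _ (LA1 a (Imp a (Imp a a))))).
  apply ded_L_discharge, dL_ax; constructor.
Qed.

Lemma ded_L_tltl_elim a : ded_L G (Imp (Tl (Tl a)) a).
Proof.
  set (t := Imp a (Imp a a)).
  assert (Ht : ded_L G t) by (apply dL_ax; constructor).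
  apply (ded_L_trans _ (Imp t a)); [|apply ded_L_discharge, Ht].
  apply (ded_L_trans _ (Imp (Tl (Tl t)) (Tl (Tl a)))).
  - apply dL_ax; constructor.
  - apply (ded_L_trans _ (Imp (Tl a) (Tl t))); apply dL_ax; constructor.
Qed.

Lemma ded_L_tltl_intro a : ded_L G (Imp a (Tl (Tl a))).
Proof. exact (dL_mp _ _ _ (ded_L_tltl_elim (Tl a)) (dL_ax _ _ (LA4 a (Tl (Tl a))))). Qed.

Lemma ded_L_contra a b : ded_L G (Imp a b) -> ded_L G (Imp (Tl b) (Tl a)).
Proof.
  intro Hab. refine (dL_mp _ _ _ _ (dL_ax _ _ (LA4 (Tl b) (Tl a)))).
  apply (ded_L_trans _ _ _ (ded_L_tltl_elim a)).
  apply (ded_L_trans _ _ _ Hab), ded_L_tltl_intro.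
Qed.

End LukasiewiczCalculus.

Lemma ded_L_weaken (G H : form -> Prop) a :
  (forall x, G x -> H x) -> ded_L G a -> ded_L H a.
Proof.
  intros GH. induction 1 as [a Ga|a Ha|a b _ IHa _ IHab].
  - apply dL_hyp, GH, Ga.
  - apply dL_ax, Ha.
  - exact (dL_mp _ _ _ IHa IHab).
Qed.

Lemma ded_L_finite_premises (Q P : form -> Prop) a :
  ded_L (fun x => Q x \/ P x) a ->
  exists D, Forall P D /\ ded_L (fun x => Q x \/ In x D) a.
Proof.
  induction 1 as [a [Qa|Pa]|a Ha|a b _ [D1 [PD1 IH1]] _ [D2 [PD2 IH2]]].
  - exists []. split; [constructor|apply dL_hyp; left; exact Qa].
  - exists [a]. split; [constructor; auto|apply dL_hyp; right; left; reflexivity].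
  - exists []. split; [constructor|apply dL_ax, Ha].
  - exists (D1 ++ D2). split; [apply Forall_app; auto|].
    assert (Hsub : forall D, incl D (D1 ++ D2) ->
      forall x, Q x \/ In x D -> Q x \/ In x (D1 ++ D2))
      by (intros D HD x [Qx|Dx]; auto).
    apply (dL_mp _ a b).
    + exact (ded_L_weaken _ _ _ (Hsub _ (incl_appl _ (incl_refl _))) IH1).
    + exact (ded_L_weaken _ _ _ (Hsub _ (incl_appr _ (incl_refl _))) IH2).
Qed.

Lemma ded_L_ded_LN (G H : form -> Prop) a :
  (forall x, H x -> ded_LN G x) -> ded_L H a -> ded_LN G a.
Proof.
  intros HG. induction 1 as [a Ha|a Ha|a b _ IHa _ IHab].
  - apply HG, Ha.
  - apply dN_ax, Ha.
  - exact (dN_mp _ _ _ IHa IHab).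
Qed.

Definition box (a : form) : form := Tl (Ng a).

Lemma In_boxdot Gamma x :
  In x (boxdot Gamma) <-> (exists g, x = box g /\ In g Gamma) \/ In x Gamma.
Proof.
  unfold boxdot. rewrite in_app_iff, in_map_iff.
  split; intros [[g [Hg Hin]]|Hx]; subst; auto; left; exists g; auto.
Qed.

Fixpoint push_box (a : form) : form :=
  match a with
  | Imp a b => Imp (push_box a) (push_box b)
  | Tl a => Tl (push_box a)
  | _ => box a
  end.

Lemma push_box_luk_axiom a : luk_axiom a -> luk_axiom (push_box a).
Proof. destruct 1; constructor. Qed.

Section BoxOverNegAxioms.

Variable G : form -> Prop.
Hypothesis G_neg_axiom : forall d, neg_axiom d -> G d.

Local Ltac neg_ax := apply dL_hyp, G_neg_axiom; constructor.

Lemma ded_L_imp_tltl_ngng a : ded_L G (Imp a (Tl (Tl (Ng (Ng a))))).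
Proof. apply (ded_L_trans _ _ (Ng (Ng a))); [neg_ax|apply ded_L_tltl_intro]. Qed.

Lemma ded_L_tltl_ngng_imp a : ded_L G (Imp (Tl (Tl (Ng (Ng a)))) a).
Proof. apply (ded_L_trans _ _ (Ng (Ng a))); [apply ded_L_tltl_elim|neg_ax]. Qed.

Lemma push_box_equiv a :
  ded_L G (Imp (push_box a) (box a)) /\ ded_L G (Imp (box a) (push_box a)).
Proof.
  induction a as [p|a [Ha1 Ha2] b [Hb1 Hb2]|a [Ha1 Ha2]|a]; cbn;
    try (split; apply ded_L_refl).
  - split; apply (ded_L_trans _ _ (Imp (box a) (box b))).
    + apply ded_L_imp_mono; assumption.
    + neg_ax.
    + neg_ax.
    + apply ded_L_imp_mono; assumption.
  - split; apply (ded_L_trans _ _ (Tl (box a))).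
    + apply ded_L_contra, Ha2.
    + apply ded_L_contra; neg_ax.
    + apply ded_L_contra; neg_ax.
    + apply ded_L_contra, Ha1.
Qed.

Lemma ded_L_box_of_push_box a : ded_L G (push_box a) -> ded_L G (box a).
Proof. intro Ha. exact (dL_mp _ _ _ Ha (proj1 (push_box_equiv a))). Qed.

Lemma ded_L_push_box_neg_axiom d : neg_axiom d -> ded_L G (push_box d).
Proof.
  destruct 1; cbn.
  - apply (ded_L_trans _ _ (box a)); [apply ded_L_contra; neg_ax|apply push_box_equiv].
  - apply (ded_L_trans _ _ (box a)); [apply push_box_equiv|apply ded_L_contra; neg_ax].
  - apply (ded_L_trans _ _ (Tl (Tl a))); [apply ded_L_contra; neg_ax|].
    apply (ded_L_trans _ _ _ _ (ded_L_tltl_elim _ _)), ded_L_imp_tltl_ngng.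
  - apply (ded_L_trans _ _ _ _ (ded_L_tltl_ngng_imp _)).
    apply (ded_L_trans _ _ _ _ (ded_L_tltl_intro _ _)), ded_L_contra; neg_ax.
  - apply (ded_L_trans _ _ _ _ (ded_L_imp_mono _ _ _ _ _
      (ded_L_imp_tltl_ngng _) (ded_L_tltl_ngng_imp _))).
    apply ded_L_imp_tltl_ngng.
  - apply (ded_L_trans _ _ _ _ (ded_L_tltl_ngng_imp _)).
    apply ded_L_imp_mono; [apply ded_L_tltl_ngng_imp|apply ded_L_imp_tltl_ngng].
Qed.

End BoxOverNegAxioms.

Definition boxdot_neg (Gamma : list form) (x : form) : Prop :=
  In x (boxdot Gamma) \/ neg_axiom x.

Lemma ded_L_boxdot_neg_box Gamma a :
  ded_L (boxdot_neg Gamma) a -> ded_L (boxdot_neg Gamma) (box a).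
Proof.
  assert (Hneg : forall d, neg_axiom d -> boxdot_neg Gamma d) by (right; assumption).
  induction 1 as [a [Ha|Ha]|a Ha|a b _ IHa _ IHab].
  - apply In_boxdot in Ha as [[g [-> Hg]]|Ha].
    + (* [push_box (box g)] is [~~¬¬g], which follows from the premise [g] *)
      apply (ded_L_box_of_push_box _ Hneg); cbn.
      refine (dL_mp _ _ _ _ (ded_L_imp_tltl_ngng _ Hneg g)).
      apply dL_hyp; left; apply In_boxdot; right; exact Hg.
    + apply dL_hyp; left; apply In_boxdot; left; eauto.
  - apply (ded_L_box_of_push_box _ Hneg), (ded_L_push_box_neg_axiom _ Hneg), Ha.
  - apply (ded_L_box_of_push_box _ Hneg), dL_ax, push_box_luk_axiom, Ha.
  - refine (dL_mp _ _ _ IHa (dL_mp _ _ _ IHab _)).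
    apply dL_hyp; right; constructor.
Qed.

Lemma ded_LN_ded_L_boxdot_neg Gamma a :
  ded_LN (fun x => In x Gamma) a -> ded_L (boxdot_neg Gamma) a.
Proof.
  induction 1 as [a Ha|a Ha|a Ha|a b _ IHa _ IHab|a _ IHa].
  - apply dL_hyp; left; apply In_boxdot; right; exact Ha.
  - apply dL_ax, Ha.
  - apply dL_hyp; right; exact Ha.
  - exact (dL_mp _ _ _ IHa IHab).
  - apply ded_L_boxdot_neg_box, IHa.
Qed.

Theorem lemma1 (Gamma : list form) (alpha : form) :
  Forall nnf Gamma -> nnf alpha ->
  (ded_LN (fun x => In x Gamma) alpha <->
   exists Delta : list form,
     Forall neg_axiom Delta /\
     ded_L (fun x => In x (boxdot Gamma) \/ In x Delta) alpha).
Proof.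
  intros _ _. split.
  - intro H. apply ded_L_finite_premises, ded_LN_ded_L_boxdot_neg, H.
  - intros [Delta [HDelta H]]. refine (ded_L_ded_LN _ _ _ _ H).
    intros x [Hx|Hx].
    + apply In_boxdot in Hx as [[g [-> Hg]]|Hx].
      * apply dN_rule, dN_hyp, Hg.
      * apply dN_hyp, Hx.
    + apply dN_nax. exact (proj1 (Forall_forall _ _) HDelta x Hx).
Qed.
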